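(* Let $G = K \rtimes_\varphi \langle t\rangle$ be a finitely generated group, where $K$ is abelian, $\langle t\rangle$ is infinite cyclic and $\varphi\in\mathrm{Aut}(K)$. Then the set of periodic points $P_\varphi=\{a\in K:\ \varphi^n(a)=a\text{ for some } n\ge1\}$ is a finitely generated subgroup of $K$ satisfying $\varphi(P_\varphi)=P_\varphi$.
   Context: $K$ is written additively and $tkt^{-1}=\varphi(k)$. *)

From HB Require Import structures.
From mathcomp Require Import all_boot all_order all_algebra.
Set Implicit Arguments. Unset Strict Implicit. Unset Printing Implicit Defensive.
Import Order.TTheory GRing.Theory Num.Theory.
Local Open Scope ring_scope.

Definition zpow (K : Type) (phi phiinv : K -> K) (m : int) : K -> K :=
  match m with
  | Posz n => iter n phi
  | Negz n => iter n.+1 phiinv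
  end.

(* The semidirect product G = K x|_phi <t>, elements (a, m) standing for a t^m,
   with (a,m)(b,n) = (a + phi^m b, m + n), identity (0,0),
   inverse (a,m)^-1 = (- phi^{-m} a, -m). *)
Section SD.
Variables (K : zmodType) (phi phiinv : K -> K).

Definition sd_mul (x y : K * int) : K * int :=
  (x.1 + zpow phi phiinv x.2 y.1, x.2 + y.2).
Definition sd_one : K * int := (0, 0).
Definition sd_inv (x : K * int) : K * int :=
  (- zpow phi phiinv (- x.2) x.1, - x.2).

Inductive sd_gen (s : seq (K * int)) : K * int -> Prop :=
  | sd_gen_base x : x \in s -> sd_gen s x
  | sd_gen_one : sd_gen s sd_one
  | sd_gen_mul x y : sd_gen s x -> sd_gen s y -> sd_gen s (sd_mul x y)
  | sd_gen_inv x : sd_gen s x -> sd_gen s (sd_inv x).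

Definition sd_fin_gen : Prop := exists s : seq (K * int), forall g, sd_gen s g.
End SD.

Inductive zgen (K : zmodType) (s : seq K) : K -> Prop :=
  | zgen_base x : x \in s -> zgen s x
  | zgen_zero : zgen s 0
  | zgen_sub x y : zgen s x -> zgen s y -> zgen s (x - y).

Definition periodic_pts (K : Type) (phi : K -> K) (a : K) : Prop :=
  exists2 n : nat, (0 < n)%N & iter n phi a = a.

From HB Require Import structures.
From mathcomp Require Import all_boot all_order all_algebra zify.
From Stdlib Require Import ClassicalEpsilon.
Set Implicit Arguments. Unset Strict Implicit. Unset Printing Implicit Defensive.
Import GRing.Theory Num.Theory.
Local Open Scope ring_scope.

(* Let X act on K as phi.  The first components of generators of G span K over
   Z[X, X^-1], so every element of K has a forward phi-iterate in their Z[X]-span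
   M.  As Z[X] is noetherian (Hilbert's basis theorem), the periodic points of M
   form a finitely generated Z[X]-module.  Its generators have a common period N,
   and the additive group spanned by their first N iterates is phi-stable,
   consists of periodic points and contains every periodic point a: it contains
   phi^m a, which lies in M, hence a = phi^(nm - m) (phi^m a) for a period n. *)

Section SubgroupClosure.
Variables (V : zmodType) (S : V -> Prop).
Hypotheses (S0 : S 0) (SB : forall u v, S u -> S v -> S (u - v)).

Lemma subgroupN v : S v -> S (- v).
Proof. by move=> Sv; rewrite -sub0r; apply: SB. Qed.

Lemma subgroupD u v : S u -> S v -> S (u + v).
Proof. by move=> Su Sv; rewrite -[v]opprK; apply/SB/subgroupN. Qed.

Lemma subgroupMz v k : S v -> S (v *~ k).
Proof.
move=> Sv; have SMn n : S (v *+ n).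
  by elim: n => [|n IHn]; rewrite ?mulr0n // mulrS; apply: subgroupD.
by case: k => n; [exact: SMn | rewrite NegzE mulrNz; apply/subgroupN/SMn].
Qed.

End SubgroupClosure.

Lemma ex_minimal (P : nat -> Prop) :
  (exists n, P n) -> exists2 m, P m & forall n, P n -> (m <= n)%N.
Proof.
pose p n := is_left (excluded_middle_informative (P n)).
have pP n : reflect (P n) (p n).
  by rewrite /p; case: excluded_middle_informative => /= H; constructor.
case=> n /pP pn; have [m /pP Pm m_min] := ex_minnP (ex_intro p n pn).
by exists m => // k /pP/m_min.
Qed.

Lemma int_subgroup_principal (Q : int -> Prop) :
  Q 0 -> (forall x y, Q x -> Q y -> Q (x - y)) ->
  exists2 g, Q g & forall c, Q c -> (g %| c)%Z.
Proof.
move=> Q0 QB.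
case: (excluded_middle_informative (exists2 c, Q c & c != 0)) => [[c Qc c_neq0]|Q_eq0].
  have Q_abs x : Q x -> Q `|x|%N.
    by move=> Qx; rewrite abszE; case: (ltrP x 0) => [/ltr0_norm|/ger0_norm] ->;
      [apply: (subgroupN Q0 QB)|].
  have c_pos : (0 < `|c|)%N by rewrite absz_gt0.
  have [m [m_gt0 Qm] m_min] :=
    ex_minimal (ex_intro (fun n => (0 < n)%N /\ Q n%:Z) _ (conj c_pos (Q_abs c Qc))).
  exists m%:Z => // x Qx; apply/dvdz_mod0P.
  have m_neq0 : m%:Z != 0 by rewrite eqz_nat -lt0n.
  have Qr : Q (x %% m)%Z.
    have -> : (x %% m)%Z = x - m%:Z *~ (x %/ m)%Z.
      by rewrite mulrzz mulrC {2}(divz_eq x m) addrAC subrr add0r.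
    exact: QB Qx (subgroupMz Q0 QB _ Qm).
  apply/eqP/negPn/negP => r_neq0.
  have r_pos : (0 < `|(x %% m)%Z|)%N by rewrite absz_gt0.
  have := m_min _ (conj r_pos (Q_abs _ Qr)).
  have := modz_ge0 x m_neq0; have : (x %% m < m)%Z by rewrite ltz_pmod // ltz_nat.
  lia.
exists 0 => // x Qx; rewrite dvd0z; apply/negPn/negP => x_neq0.
by apply: Q_eq0; exists x.
Qed.

Section FSpan.
Variables (V : zmodType) (f : V -> V).

Inductive fspan (gs : seq V) : V -> Prop :=
  | fspan_gen v : v \in gs -> fspan gs v
  | fspan0 : fspan gs 0
  | fspanB u v : fspan gs u -> fspan gs v -> fspan gs (u - v)
  | fspan_map v : fspan gs v -> fspan gs (f v).

Lemma fspanD gs u v : fspan gs u -> fspan gs v -> fspan gs (u + v).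
Proof. by apply: subgroupD; [exact: fspan0 | exact: fspanB]. Qed.

Lemma fspanMz gs v k : fspan gs v -> fspan gs (v *~ k).
Proof. by apply: subgroupMz; [exact: fspan0 | exact: fspanB]. Qed.

Lemma fspan_iter gs n v : fspan gs v -> fspan gs (iter n f v).
Proof. by move=> gs_v; elim: n => //= n; apply: fspan_map. Qed.

Lemma fspan_min gs (S : V -> Prop) :
  S 0 -> (forall u v, S u -> S v -> S (u - v)) -> (forall v, S v -> S (f v)) ->
  (forall g, g \in gs -> S g) -> forall v, fspan gs v -> S v.
Proof. by move=> S0 SB Sf Sgs v; elim=> *; auto. Qed.

Lemma fspan_subset gs hs : {subset gs <= hs} -> forall v, fspan gs v -> fspan hs v.
Proof.
move=> gs_hs; apply: fspan_min => [|u v|v|g /gs_hs];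
  [exact: fspan0 | exact: fspanB | exact: fspan_map | exact: fspan_gen].
Qed.

End FSpan.

Lemma seq_choice (T U : eqType) (xs : seq T) (R : T -> U -> Prop) :
  (forall x, x \in xs -> exists y, R x y) ->
  exists2 ys : seq U, (forall y, y \in ys -> exists2 x, x \in xs & R x y)
                    & (forall x, x \in xs -> exists2 y, y \in ys & R x y).
Proof.
elim: xs => [|x xs IHxs] exR; first by exists [::].
have [y Rxy] := exR x (mem_head x xs).
have [|ys ys_xs xs_ys] := IHxs; first by move=> z z_xs; apply: exR; rewrite inE z_xs orbT.
exists (y :: ys) => [z|z]; rewrite inE => /orP[/eqP->|].
- by exists x; rewrite ?mem_head.
- by case/ys_xs=> w w_xs Rwz; exists w; rewrite // inE w_xs orbT.
- by exists y; rewrite ?mem_head.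
- by case/xs_ys=> w w_ys Rzw; exists w; rewrite // inE w_ys orbT.
Qed.

Lemma mulXn_iter (R : nzRingType) n (p : {poly R}) : 'X^n * p = iter n ( *%R 'X) p.
Proof. by elim: n => [|n IHn]; rewrite ?expr0 ?mul1r //= -IHn exprS mulrA. Qed.

Lemma size_cancel_coef (p f : {poly int}) d N k :
  (size p <= N.+1)%N -> (size f <= d.+1)%N -> (d <= N)%N -> p`_N = k * f`_d ->
  (size (p - ('X^(N - d) * f) *~ k)%R <= N)%N.
Proof.
move=> /leq_sizeP sp /leq_sizeP sf dN pN; apply/leq_sizeP => j Nj.
rewrite coefB coefMrz coefXnM.
have [->|jN] := eqVneq j N.
  by rewrite ltnNge leq_subr /= subKn // pN mulrzz mulrC subrr.
have pj : p`_j = 0 by apply: sp; lia.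
have fj : f`_(j - (N - d))%N = 0 by apply: sf; lia.
by rewrite pj fj; case: ifP; rewrite mul0rz subrr.
Qed.

Section IdealZX.
Variable I : {poly int} -> Prop.
Hypotheses (I0 : I 0) (IB : forall p q, I p -> I q -> I (p - q))
           (IX : forall p, I p -> I ('X * p)).

Definition top_coefs d (c : int) := exists2 p, I p & (size p <= d.+1)%N /\ p`_d = c.

Lemma top_coefs0 d : top_coefs d 0.
Proof. by exists 0; rewrite ?size_poly0 ?coef0. Qed.

Lemma top_coefsB d b c : top_coefs d b -> top_coefs d c -> top_coefs d (b - c).
Proof.
move=> [p Ip [sp <-]] [q Iq [sq <-]]; exists (p - q); first exact: IB.
by rewrite coefB (leq_trans (size_polyD _ _)) // size_polyN geq_max sp.
Qed.

Lemma top_coefs_mono d e c : (d <= e)%N -> top_coefs d c -> top_coefs e c.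
Proof.
move=> /subnKC <-; elim: (e - d)%N => [|k IHk] /=; first by rewrite addn0.
move=> /IHk [p Ip [sp <-]]; exists ('X * p); first exact: IX.
rewrite addnS coefXM /=; split=> //.
by apply/leq_sizeP => -[|j] j_gt; rewrite coefXM //=; apply: (leq_sizeP _ _ sp).
Qed.

Lemma ideal_mulXn n p : I p -> I ('X^n * p).
Proof. by move=> Ip; rewrite mulXn_iter; elim: n => //= n; apply: IX. Qed.

Lemma top_coefs_gen d :
  exists f, [/\ I f, (size f <= d.+1)%N & forall c, top_coefs d c -> (f`_d %| c)%Z].
Proof.
have [_ [f If [sf <-]] f_gen] := int_subgroup_principal (top_coefs0 d) (@top_coefsB d).
by exists f.
Qed.

(* The union of the increasing chain top_coefs d is a principal subgroup of int,
   so the chain is stationary from the degree of a generator on. *)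
Lemma top_coefs_bounded : exists D, forall N c, top_coefs N c -> top_coefs D c.
Proof.
have [g [D gD] g_gen] : exists2 g, (exists d, top_coefs d g) &
    forall c, (exists d, top_coefs d c) -> (g %| c)%Z.
  apply: int_subgroup_principal => [|b c [d b_d] [e c_e]].
    by exists 0%N; apply: top_coefs0.
  exists (maxn d e); apply: top_coefsB.
    by apply: top_coefs_mono b_d; rewrite leq_maxl.
  by apply: top_coefs_mono c_e; rewrite leq_maxr.
exists D => N c cN; have /dvdzP[k ->] := g_gen c (ex_intro _ N cN).
by rewrite mulrC -mulrzz; apply: (subgroupMz (top_coefs0 D) (@top_coefsB D)).
Qed.

Theorem ideal_fg :
  exists2 fs, (forall f, f \in fs -> I f) & forall p, I p -> fspan ( *%R 'X) fs p.
Proof.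
have [D top_coefsD] := top_coefs_bounded.
have [fs fs_I fs_gen] := seq_choice (xs := iota 0 D.+1) (fun d _ => top_coefs_gen d).
exists fs => [f /fs_I [d _ []] // | p Ip].
suff fs_span N (q : {poly int}) : (size q <= N)%N -> I q -> fspan ( *%R 'X) fs q.
  exact: fs_span _ _ (leqnn _) Ip.
elim: N q => [|N IHN] q sq Iq.
  by move: sq; rewrite leqn0 size_poly_eq0 => /eqP->; apply: fspan0.
pose d := minn N D.
have [f f_fs [If sf f_div]] : exists2 f, f \in fs & [/\ I f, (size f <= d.+1)%N &
    forall c, top_coefs d c -> (f`_d %| c)%Z].
  by apply: fs_gen; rewrite mem_iota /d; lia.
have qN : top_coefs d q`_N.
  have [ND | DN] := leqP N D; first by rewrite /d (minn_idPl ND); exists q.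
  by rewrite /d (minn_idPr (ltnW DN)); apply: (top_coefsD N); exists q.
set k := (q`_N %/ f`_d)%Z; set r := ('X^(N - d) * f) *~ k.
have -> : q = (q - r) + r by rewrite subrK.
apply: fspanD.
  apply: IHN; first by apply: size_cancel_coef => //; [lia | rewrite divzK ?f_div].
  by apply: IB => //; apply: (subgroupMz I0 IB); apply: ideal_mulXn.
by apply: fspanMz; rewrite mulXn_iter; apply/fspan_iter/fspan_gen.
Qed.

End IdealZX.

Section PolyAction.
Variables (K : zmodType) (f : {additive K -> K}).
Implicit Types (p q : {poly int}) (x : K).

Definition act (p : {poly int}) (x : K) := \sum_(i < size p) iter i f x *~ p`_i.

Lemma act_widen n p x : (size p <= n)%N -> act p x = \sum_(i < n) iter i f x *~ p`_i.
Proof.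
move=> le_pn; rewrite /act (big_ord_widen n (fun i => iter i f x *~ p`_i) le_pn).
rewrite big_mkcond; apply: eq_bigr => i _; case: ltnP => // /leq_sizeP p_i.
by rewrite p_i ?mulr0z.
Qed.

Lemma act0 x : act 0 x = 0.
Proof. by rewrite /act size_poly0 big_ord0. Qed.

Lemma act1 x : act 1 x = x.
Proof. by rewrite /act size_poly1 big_ord1 coef1. Qed.

Lemma actB p q x : act (p - q) x = act p x - act q x.
Proof.
set n := maxn (size p) (size q).
rewrite (@act_widen n (p - q)); last by rewrite (leq_trans (size_polyD _ _)) ?size_polyN.
rewrite (@act_widen n p) ?leq_maxl // (@act_widen n q) ?leq_maxr // -sumrB.
by apply: eq_bigr => i _; rewrite coefB mulrzBr.
Qed.

Lemma act_mulX p x : act ('X * p) x = f (act p x).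
Proof.
rewrite (@act_widen (size p).+1); last first.
  by apply/leq_sizeP => -[|j] j_gt; rewrite coefXM //=; apply: (leq_sizeP _ _ (leqnn _)).
rewrite big_ord_recl coefXM mulr0z add0r raddf_sum.
by apply: eq_bigr => i _; rewrite coefXM iterS raddfMz.
Qed.

End PolyAction.

Section SubmoduleFG.
Variables (K : zmodType) (f : {additive K -> K}).

Lemma fspan_cons_act b bs v :
  fspan f (b :: bs) v -> exists p, fspan f bs (v - act f p b).
Proof.
elim=> [{}v|||{}v _ [p bs_vp]].
- rewrite inE => /orP[/eqP-> | v_bs]; first by exists 1; rewrite act1 subrr; apply: fspan0.
  by exists 0; rewrite act0 subr0; apply: fspan_gen.
- by exists 0; rewrite act0 subr0; apply: fspan0.
- move=> u w _ [p bs_up] _ [q bs_wq]; exists (p - q).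
  by rewrite actB opprD addrACA -opprD; apply: fspanB.
- by exists ('X * p); rewrite act_mulX -raddfB; apply: fspan_map.
Qed.

Lemma fspan_act_lift b bs ps ss :
  (forall p, p \in ps -> exists2 s, s \in ss & fspan f bs (s - act f p b)) ->
  forall p, fspan ( *%R 'X) ps p -> exists2 u, fspan f ss u & fspan f bs (u - act f p b).
Proof.
move=> ps_ss p; elim=> [{}p /ps_ss [s ss_s bs_s]||p1 p2 _ [u ss_u bs_u] _ [v ss_v bs_v]|
                        {}p _ [u ss_u bs_u]].
- by exists s => //; apply: fspan_gen.
- by exists 0; rewrite ?act0 ?subr0; apply: fspan0.
- exists (u - v); first exact: fspanB.
  by rewrite actB opprD addrACA -opprD; apply: fspanB.
- exists (f u); first exact: fspan_map.
  by rewrite act_mulX -raddfB; apply: fspan_map.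
Qed.

Lemma submodule_cons_reduce b bs (S : K -> Prop) :
  S 0 -> (forall u v, S u -> S v -> S (u - v)) -> (forall v, S v -> S (f v)) ->
  exists2 ss, (forall s, s \in ss -> S s) &
    forall v, S v -> fspan f (b :: bs) v -> exists2 u, fspan f ss u & fspan f bs (v - u).
Proof.
move=> S0 SB Sf; pose I p := exists2 v, S v & fspan f bs (v - act f p b).
have I0 : I 0 by exists 0; rewrite ?act0 ?subrr //; apply: fspan0.
have IB p q : I p -> I q -> I (p - q).
  move=> [u Su bs_u] [v Sv bs_v]; exists (u - v); first exact: SB.
  by rewrite actB opprD addrACA -opprD; apply: fspanB.
have IX p : I p -> I ('X * p).
  move=> [v Sv bs_v]; exists (f v); first exact: Sf.
  by rewrite act_mulX -raddfB; apply: fspan_map.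
have [ps ps_I ps_gen] := ideal_fg I0 IB IX.
have ps_R p : p \in ps -> exists s, S s /\ fspan f bs (s - act f p b).
  by case/ps_I=> v Sv bs_v; exists v.
have [ss ss_ps ps_ss] := seq_choice ps_R.
exists ss => [s /ss_ps[p _ []] // | v Sv /fspan_cons_act[p bs_vp]].
have ps_ss_span q : q \in ps -> exists2 s, s \in ss & fspan f bs (s - act f q b).
  by case/ps_ss=> s ss_s [_ bs_s]; exists s.
have [u ss_u bs_up] := fspan_act_lift ps_ss_span (ps_gen p (ex_intro2 _ _ v Sv bs_vp)).
exists u => //; have -> : v - u = (v - act f p b) - (u - act f p b).
  by rewrite opprB addrA subrK.
exact: fspanB.
Qed.

Theorem fspan_submodule_fg (bs : seq K) (S : K -> Prop) :
  S 0 -> (forall u v, S u -> S v -> S (u - v)) -> (forall v, S v -> S (f v)) ->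
  (forall v, S v -> fspan f bs v) ->
  exists2 gs, (forall g, g \in gs -> S g) & forall v, S v -> fspan f gs v.
Proof.
elim: bs S => [|b bs IHbs] S S0 SB Sf S_bs; first by exists [::].
have [ss ss_S ss_gen] := submodule_cons_reduce b bs S0 SB Sf.
have [hs hs_S hs_gen] := IHbs (fun v => S v /\ fspan f bs v) (conj S0 (fspan0 f bs))
  (fun u v '(conj Su bs_u) '(conj Sv bs_v) => conj (SB u v Su Sv) (fspanB bs_u bs_v))
  (fun v '(conj Sv bs_v) => conj (Sf v Sv) (fspan_map bs_v)) (fun v => @proj2 _ _).
exists (ss ++ hs) => [g | v Sv]; first by rewrite mem_cat => /orP[/ss_S | /hs_S[]].
have [u ss_u bs_vu] := ss_gen v Sv (S_bs v Sv).
have Su : S u by apply: (fspan_min S0 SB Sf) ss_u.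
have hs_vu := hs_gen _ (conj (SB _ _ Sv Su) bs_vu).
rewrite -(subrK u v); apply: fspanD.
  by apply: fspan_subset hs_vu => g g_hs; rewrite mem_cat g_hs orbT.
by apply: fspan_subset ss_u => g g_ss; rewrite mem_cat g_ss.
Qed.

End SubmoduleFG.

Lemma iter_fixed_mul (T : Type) (f : T -> T) n k x :
  iter n f x = x -> iter (n * k) f x = x.
Proof. by move=> fx; rewrite mulnC; elim: k => //= k IHk; rewrite iterD IHk fx. Qed.

Lemma periodic_can (T : Type) (f g : T -> T) x :
  cancel f g -> cancel g f -> periodic_pts f x -> periodic_pts f (g x).
Proof.
move=> fK gK [n n_gt0 fx]; exists n => //; apply: (can_inj fK).
by rewrite -iterS iterSr gK fx.
Qed.

Lemma periodic_iter (T : Type) (f : T -> T) m x :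
  periodic_pts f x -> periodic_pts f (iter m f x).
Proof. by case=> n n_gt0 fx; exists n; rewrite // -iterD addnC iterD fx. Qed.

Lemma common_period (T : eqType) (f : T -> T) (xs : seq T) :
  (forall x, x \in xs -> periodic_pts f x) ->
  exists2 N, (0 < N)%N & forall x, x \in xs -> iter N f x = x.
Proof.
elim: xs => [|y xs IHxs] xs_per; first by exists 1%N.
have [|N N_gt0 xsN] := IHxs; first by move=> x x_xs; apply: xs_per; rewrite inE x_xs orbT.
have [n n_gt0 yn] := xs_per y (mem_head y xs).
exists (N * n)%N => [|x]; first by rewrite muln_gt0 N_gt0.
rewrite inE => /orP[/eqP-> | /xsN xN]; last exact: iter_fixed_mul.
by rewrite mulnC iter_fixed_mul.
Qed.

Section AdditiveDynamics.
Variables (K : zmodType) (f : {additive K -> K}).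

Lemma iterB n x y : iter n f (x - y) = iter n f x - iter n f y.
Proof. by elim: n => //= n ->; rewrite raddfB. Qed.

Lemma periodic0 : periodic_pts f 0.
Proof. by exists 1%N; rewrite //= raddf0. Qed.

Lemma periodicB x y : periodic_pts f x -> periodic_pts f y -> periodic_pts f (x - y).
Proof.
move=> [n n_gt0 xn] [m m_gt0 ym]; exists (n * m)%N; first by rewrite muln_gt0 n_gt0.
by rewrite iterB iter_fixed_mul // mulnC iter_fixed_mul.
Qed.

(* The generators of G span K only over Z[X, X^-1]; a forward shift corrects this. *)
Definition fspan_shift bs x := exists m, fspan f bs (iter m f x).

Lemma fspan_shift0 bs : fspan_shift bs 0.
Proof. by exists 0%N; apply: fspan0. Qed.

Lemma fspan_shiftB bs x y : fspan_shift bs x -> fspan_shift bs y -> fspan_shift bs (x - y).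
Proof.
move=> [m bs_x] [n bs_y]; exists (n + m)%N.
by rewrite iterB iterD addnC iterD; apply: fspanB; apply: fspan_iter.
Qed.

Section Semidirect.
Variables (finv : K -> K) (finvK : cancel finv f).

Lemma fspan_shift_zpow bs k x : fspan_shift bs x -> fspan_shift bs (zpow f finv k x).
Proof.
have shift_map y : fspan_shift bs y -> fspan_shift bs (f y).
  by case=> m bs_y; exists m; rewrite -iterSr iterS; apply: fspan_map.
have shift_inv y : fspan_shift bs y -> fspan_shift bs (finv y).
  by case=> m bs_y; exists m.+1; rewrite iterSr finvK.
move=> bs_x; case: k => n; first by elim: n => // n /shift_map.
by change (fspan_shift bs (iter n.+1 finv x)); elim: n.+1 => // j /shift_inv.
Qed.

Lemma sd_gen_fspan_shift (s : seq (K * int)) g :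
  sd_gen f finv s g -> fspan_shift [seq x.1 | x <- s] g.1.
Proof.
have S0 := fspan_shift0 [seq x.1 | x <- s]; have SB := @fspan_shiftB [seq x.1 | x <- s].
elim=> [x x_s | | x y _ Sx _ Sy | x _ Sx] /=.
- by exists 0%N; apply/fspan_gen/map_f.
- exact: S0.
- by apply: (subgroupD S0 SB) => //; apply: fspan_shift_zpow.
- by apply: (subgroupN S0 SB); apply: fspan_shift_zpow.
Qed.

End Semidirect.

Definition orbit_list N gs := [seq iter j f g | g <- gs, j <- iota 0 N].

Section Orbits.
Variables (N : nat) (gs : seq K).
Hypotheses (N_gt0 : (0 < N)%N) (gsN : forall g, g \in gs -> iter N f g = g).

Lemma zgen_orbit_fixed x : zgen (orbit_list N gs) x -> iter N f x = x.
Proof.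
elim=> [y /allpairsP[[g j] [g_gs _ ->]] | | y z _ yN _ zN] /=.
- by rewrite -iterD addnC iterD gsN.
- by rewrite -(subrr (0 : K)) iterB !subrr.
- by rewrite iterB yN zN.
Qed.

Lemma zgen_orbit_map x : zgen (orbit_list N gs) x -> zgen (orbit_list N gs) (f x).
Proof.
elim=> [y /allpairsP[[g j] [g_gs /= j_N ->]] | | y z _ Ly _ Lz].
- rewrite mem_iota add0n /= in j_N; apply/zgen_base/allpairsP; rewrite -iterS.
  have [jN | Nj] := ltnP j.+1 N; first by exists (g, j.+1); rewrite mem_iota.
  have -> : j.+1 = N by apply/eqP; rewrite eqn_leq j_N Nj.
  by exists (g, 0%N); rewrite mem_iota N_gt0 gsN.
- by rewrite raddf0; apply: zgen_zero.
- by rewrite raddfB; apply: zgen_sub.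
Qed.

Lemma zgen_orbit_iter n x : zgen (orbit_list N gs) x -> zgen (orbit_list N gs) (iter n f x).
Proof. by move=> Lx; elim: n => //= n /zgen_orbit_map. Qed.

Lemma fspan_zgen_orbit x : fspan f gs x -> zgen (orbit_list N gs) x.
Proof.
elim=> [g g_gs | | y z _ Ly _ Lz | y _ /zgen_orbit_map //].
- by apply/zgen_base/allpairsP; exists (g, 0%N); rewrite mem_iota.
- exact: zgen_zero.
- exact: zgen_sub.
Qed.

End Orbits.

End AdditiveDynamics.

Theorem corollary2p10 (K : zmodType) (phi phiinv : K -> K)
  (phi_add : {morph phi : x y / x + y})
  (phiK : cancel phi phiinv) (phiinvK : cancel phiinv phi)
  (Gfg : sd_fin_gen phi phiinv) :
  [/\ periodic_pts phi 0,
      (forall a b, periodic_pts phi a -> periodic_pts phi b ->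
                   periodic_pts phi (a - b)),
      (exists s : seq K, forall a, periodic_pts phi a <-> zgen s a),
      (forall a, periodic_pts phi a -> periodic_pts phi (phi a)) &
      (forall a, periodic_pts phi a -> exists2 b, periodic_pts phi b & phi b = a)].
Proof.
have phi0 : phi 0 = 0 by apply: (addIr (phi 0)); rewrite -phi_add !add0r.
pose f : {additive K -> K} := HB.pack phi (GRing.isNmodMorphism.Build K K phi (phi0, phi_add)).
have [s gen_s] := Gfg; set bs := [seq x.1 | x <- s].
have [gs gs_S S_gs] := fspan_submodule_fg (f := f) (bs := bs)
  (S := fun a => periodic_pts phi a /\ fspan phi bs a) (conj (periodic0 f) (fspan0 f bs))
  (fun a b '(conj Pa bs_a) '(conj Pb bs_b) => conj (periodicB (f := f) Pa Pb) (fspanB bs_a bs_b))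
  (fun a '(conj Pa bs_a) => conj (periodic_iter 1 Pa) (fspan_map bs_a))
  (fun a => @proj2 _ _).
have [N N_gt0 gsN] := common_period (fun g g_gs => (gs_S g g_gs).1).
split=> [|a b||a|a Pa].
- exact: (periodic0 f).
- exact: (periodicB (f := f)).
- exists (orbit_list f N gs) => a; split=> [[n n_gt0 an] | La].
    have [m bs_m] := sd_gen_fspan_shift (f := f) phiinvK (gen_s (a, 0)).
    have L_am : zgen (orbit_list f N gs) (iter m phi a).
      apply: (fspan_zgen_orbit (f := f) N_gt0 gsN); apply: S_gs; split=> //.
      by apply: periodic_iter; exists n.
    rewrite -(iter_fixed_mul m an) -(subnK (leq_pmull m n_gt0)) iterD.
    exact: (zgen_orbit_iter (f := f) N_gt0 gsN).
  by exists N; last exact: (zgen_orbit_fixed (f := f) gsN).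
- exact: (@periodic_iter _ phi 1 a).
- by exists (phiinv a); [apply: periodic_can | apply: phiinvK].
Qed.
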